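(* Let $T$ be a positive invertible operator on a separable real or complex Hilbert space $\mathcal{H}$ and let $K>0$. The ellipsoidal surface $\mathcal{E}_T=T\mathcal{S}_1$ contains a tight frame $\{y_j\}$ for $\mathcal{H}$ with frame bound $K$ if and only if the operator $R=KT^{-2}$ admits a projection decomposition. In this case $R$ is the frame operator of the frame $\{T^{-1}y_j\}$ consisting of unit vectors.
   Context: $\mathcal{S}_1=\{x\in\mathcal{H}:\|x\|=1\}$. A sequence $\{x_j\}$ is a frame if there are $0<A\le B$ with $A\|x\|^2\le\sum_j|\langle x,x_j\rangle|^2\le B\|x\|^2$ for all $x$; it is tight with frame bound $K$ if $A=B=K$. The frame operator is $Sw=\sum_j\langle w,x_j\rangle x_j$ (strongly convergent). A positive operator has a projection decomposition if it is the sum of a finite or infinite sequence of (not necessarily mutually orthogonal) self-adjoint projections, with convergence in the strong operator topology. *)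

(* scalars are a realType R (real case) or R[i] (complex case). *)
From HB Require Import structures.
From mathcomp Require Import all_boot all_order all_algebra.
From mathcomp Require Import reals.
From mathcomp Require Export complex.
Set Implicit Arguments. Unset Strict Implicit. Unset Printing Implicit Defensive.
Import Order.TTheory GRing.Theory Num.Theory.
Local Open Scope ring_scope.

Section Hilbert.
Variables (K : numFieldType) (cj : K -> K) (V : lmodType K) (ip : V -> V -> K).

Definition nsq (x : V) : K := ip x x.

Definition cvgK (u : nat -> K) (l : K) : Prop :=
  forall e : K, 0 < e -> exists N : nat, forall n, (N <= n)%N -> `|u n - l| < e.

Definition cvgV (u : nat -> V) (l : V) : Prop :=
  forall e : K, 0 < e -> exists N : nat, forall n, (N <= n)%N -> `|nsq (u n - l)| < e.

Definition cauchyV (u : nat -> V) : Prop :=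
  forall e : K, 0 < e -> exists N : nat, forall m n, (N <= m)%N -> (N <= n)%N ->
    `|nsq (u m - u n)| < e.

(* inner product: linear in the first argument, cj-symmetric, positive definite;
   cj is the identity in the real case and complex conjugation in the complex case *)
Definition inner_product : Prop :=
  [/\ forall (a : K) (x y z : V), ip (a *: x + y) z = a * ip x z + ip y z,
      forall x y, ip x y = cj (ip y x),
      forall x, 0 <= ip x x &
      forall x, ip x x = 0 -> x = 0].

Definition separable_hilbert : Prop :=
  [/\ inner_product,
      forall u : nat -> V, cauchyV u -> exists l, cvgV u l &
      exists d : nat -> V, forall x (e : K), 0 < e -> exists n, `|nsq (x - d n)| < e].

Definition bounded_op (A : V -> V) : Prop :=
  exists M : K, forall x, `|nsq (A x)| <= M * `|nsq x|.

Definition self_adjoint (A : V -> V) : Prop := forall x y, ip (A x) y = ip x (A y).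

Definition positive_op (A : {linear V -> V}) : Prop :=
  [/\ bounded_op A, self_adjoint A & forall x, 0 <= ip (A x) x].

Definition sa_projection (P : {linear V -> V}) : Prop :=
  (forall x, P (P x) = P x) /\ self_adjoint P.

(* index set of a finite (Some n: indices j < n) or infinite (None: all j) sequence *)
Definition inJ (N : option nat) (j : nat) : bool :=
  if N is Some n then (j < n)%N else true.

Definition psum (N : option nat) (f : nat -> K) (n : nat) : K :=
  \sum_(j < n | inJ N j) f j.
Definition psumV (N : option nat) (f : nat -> V) (n : nat) : V :=
  \sum_(j < n | inJ N j) f j.

Definition is_frame (N : option nat) (x : nat -> V) : Prop :=
  exists A B : K, [/\ 0 < A, A <= B &
    forall w, exists s : K, cvgK (psum N (fun j => `|ip w (x j)| ^+ 2)) s /\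
      A * nsq w <= s <= B * nsq w].

Definition is_tight_frame (N : option nat) (x : nat -> V) (k : K) : Prop :=
  forall w, cvgK (psum N (fun j => `|ip w (x j)| ^+ 2)) (k * nsq w).

Definition is_frame_operator (N : option nat) (x : nat -> V) (S : V -> V) : Prop :=
  forall w, cvgV (psumV N (fun j => ip w (x j) *: x j)) (S w).

Definition in_ellipsoid (T : V -> V) (y : V) : Prop :=
  exists u : V, nsq u = 1 /\ y = T u.

Definition projection_decomposition (Rop : V -> V) : Prop :=
  exists (N : option nat) (P : nat -> {linear V -> V}),
    (forall j, inJ N j -> sa_projection (P j)) /\
    forall w, cvgV (psumV N (fun j => P j w)) (Rop w).

End Hilbert.

(* Write the frame vectors as y_j = T u_j with ||u_j|| = 1. As T is
   self-adjoint, sum_j |<w, y_j>|^2 = sum_j |<T w, u_j>|^2, so {y_j} is a tight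
   frame with bound k exactly when sum_j |<w, u_j>|^2 = k ||T^-1 w||^2 = <R w, w>
   for all w. In that case the partial sums of sum_j <w, u_j> u_j are Cauchy (a
   Bessel-type estimate) and their limit L satisfies <(L - R) w, w> = 0 with
   L - R symmetric, hence L = R: R is the frame operator of {u_j} and the sum of
   the rank-one projections onto the u_j. Conversely, if R = sum_j P_j, an
   orthonormal basis of each range (Gram-Schmidt on P_j applied to a dense
   sequence) gives sum_m |<w, e_jm>|^2 = <P_j w, w>; enumerating the double
   family along the Cantor pairing and dropping zero vectors yields unit vectors
   u_i with sum_i |<w, u_i>|^2 = <R w, w>, and y_i = T u_i is the tight frame. *)

From HB Require Import structures.
From mathcomp Require Import all_boot all_order all_algebra.
From mathcomp Require Import reals complex ring boolp.
Set Implicit Arguments. Unset Strict Implicit. Unset Printing Implicit Defensive.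
Import Order.TTheory GRing.Theory Num.Theory.
Local Open Scope ring_scope.

Section ScalarSeries.
Variable K : numFieldType.
Implicit Types (u v g : nat -> K) (x l : K).

Lemma ge0_lt_all_eq0 x : 0 <= x -> (forall e, 0 < e -> x < e) -> x = 0.
Proof.
move=> x0 H; have [/eqP//|xn] := boolP (x == 0).
by have := H x; rewrite lt0r xn x0 ltxx => /(_ isT).
Qed.

Lemma cvgK_ext u v l : u =1 v -> cvgK u l -> cvgK v l.
Proof. by move=> uv H e e0; have [M HM] := H e e0; exists M => n /HM; rewrite uv. Qed.

Lemma cvgK_unique u a b : cvgK u a -> cvgK u b -> a = b.
Proof.
move=> ha hb; apply/eqP; rewrite -subr_eq0; apply/eqP/normr0_eq0.
apply: ge0_lt_all_eq0 => // e e0.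
have [N1 H1] := ha _ (divr_gt0 e0 (ltr0Sn _ 1)).
have [N2 H2] := hb _ (divr_gt0 e0 (ltr0Sn _ 1)).
have := H1 (maxn N1 N2) (leq_maxl _ _); have := H2 (maxn N1 N2) (leq_maxr _ _).
set w := u _ => h2 h1; rewrite (splitr e).
by apply: le_lt_trans (ler_distD w _ _) _; rewrite distrC ltrD.
Qed.

Lemma cvgK_ge0 u l N0 : (forall n, (N0 <= n)%N -> 0 <= u n) -> cvgK u l -> 0 <= l.
Proof.
move=> u0 hl; suff /eqP : `|l - `|l| | = 0 by rewrite normr_eq0 subr_eq0 => /eqP ->.
apply: ge0_lt_all_eq0 => // e e0.
have [N HN] := hl _ (divr_gt0 e0 (ltr0Sn _ 1)).
set n := maxn N N0; have un0 : 0 <= u n by apply: u0; rewrite leq_maxr.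
have hn : `|u n - l| < e / 2 by apply: HN; rewrite leq_maxl.
rewrite (splitr e); apply: le_lt_trans (ler_distD (u n) _ _) _.
apply: ltrD; first by rewrite distrC.
rewrite -(ger0_norm un0) distrC; apply: le_lt_trans (ler_dist_dist _ _) _.
by rewrite distrC.
Qed.

Lemma cvgK_ge u l b N0 : (forall n, (N0 <= n)%N -> b <= u n) -> cvgK u l -> b <= l.
Proof.
move=> ub hl; rewrite -subr_ge0; apply: (@cvgK_ge0 (fun n => u n - b) _ N0).
  by move=> n /ub; rewrite subr_ge0.
by move=> e /hl [N HN]; exists N => n /HN; rewrite opprB addrA subrK.
Qed.

Lemma cvgK_squeeze u l :
  (forall e, 0 < e -> exists N, forall n, (N <= n)%N -> l - e < u n) ->
  (forall n, u n <= l) -> cvgK u l.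
Proof.
move=> hlo hup e e0; have [N H] := hlo e e0; exists N => n hn.
have hr : u n - l \is Num.real by rewrite realBC ger0_real // subr_ge0.
rewrite real_ltr_norml // (le_lt_trans _ e0) ?subr_le0 ?hup // andbT.
by rewrite -(ltrD2l l) [l + (u n - l)]addrC subrK; apply: H.
Qed.

Definition series g n := \sum_(j < n) g j.

Lemma seriesS g n : series g n.+1 = series g n + g n.
Proof. by rewrite /series big_ord_recr. Qed.

Lemma series_mono g m n : (forall j, 0 <= g j) -> (m <= n)%N -> series g m <= series g n.
Proof.
move=> g0 /subnKC <-; elim: (n - m)%N => [|k IH]; first by rewrite addn0.
by rewrite addnS seriesS (le_trans IH) // lerDl.
Qed.

Lemma series_le_cvg g l n : (forall j, 0 <= g j) -> cvgK (series g) l -> series g n <= l.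
Proof. by move=> g0; apply: (@cvgK_ge _ _ _ n) => m; apply: series_mono. Qed.

Lemma series_zero_gap g a b : (a <= b)%N ->
  (forall i, (a <= i < b)%N -> g i = 0) -> series g a = series g b.
Proof.
move=> ab g0; rewrite /series -!(big_mkord xpredT g) (big_cat_nat (leq0n a) ab) /=.
by rewrite [X in _ + X]big_nat_cond [X in _ + X]big1 ?addr0 // => i /andP [/g0].
Qed.

Lemma psum_Some c g n : (c <= n)%N -> psum (Some c) g n = \sum_(j < c) g j.
Proof.
move=> cn; rewrite /psum -(big_mkord (fun j => inJ (Some c) j)) -(big_mkord xpredT g).
by rewrite (big_nat_widen 0 c n xpredT g cn).
Qed.

End ScalarSeries.

Fixpoint unpair (i : nat) : nat * nat :=
  if i is i'.+1 then
    let p := unpair i' in if p.2 is b.+1 then (p.1.+1, b) else (0, p.1.+1)%N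
  else (0, 0)%N.

Fixpoint triangular (e : nat) : nat := if e is e'.+1 then (triangular e' + e'.+1)%N else 0%N.

Lemma unpair_triangular e j : (j <= e)%N -> unpair (triangular e + j) = (j, e - j)%N.
Proof.
elim: e j => [|e IHe] j; first by rewrite leqn0 => /eqP ->.
elim: j => [_|j IHj] /=; first by rewrite addn0 addnS /= IHe // subnn.
move=> je; rewrite addnS /= IHj ?(ltnW je) //.
by rewrite subSn ?(ltnW je) //= subSS; case: (e - j)%N (subn_gt0 j e) => // k _.
Qed.

Lemma leq_triangular n : (n <= triangular n)%N.
Proof. by elim: n => //= n IH; rewrite -[n.+1]add0n leq_add. Qed.

Lemma lt_sub_of_dist (K : numDomainType) (a b e : K) : a <= b -> `|a - b| < e -> b - e < a.
Proof.
move=> ab; rewrite distrC ger0_norm ?subr_ge0 // => h.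
by rewrite ltrBlDr addrC -ltrBlDr.
Qed.

(* [unpair] enumerates [nat * nat] diagonal by diagonal, so the first
   [triangular d] terms of [cantor_series] form the triangle [j + m < d]. *)
Section CantorSeries.
Variables (K : numFieldType) (A : nat -> nat -> K).
Hypothesis A_ge0 : forall j m, 0 <= A j m.

Definition cantor_series n := \sum_(0 <= i < n) A (unpair i).1 (unpair i).2.

Lemma cantor_series_triangular d :
  cantor_series (triangular d) = \sum_(0 <= j < d) \sum_(0 <= m < d - j) A j m.
Proof.
elim: d => [|d IH]; first by rewrite /cantor_series !big_geq.
rewrite /cantor_series /= (big_cat_nat (leq0n _) (leq_addr _ _)) /= -/(cantor_series _) IH.
have -> : \sum_(triangular d <= i < triangular d + d.+1) A (unpair i).1 (unpair i).2 =
    \sum_(0 <= i < d.+1) A i (d - i).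
  rewrite -{1}[triangular d]add0n big_addn addKn; apply: eq_big_nat => i /andP [_ hi].
  by rewrite addnC unpair_triangular.
rewrite [in RHS]big_nat_recr //= subSnn big_nat1.
have -> : \sum_(0 <= i < d) \sum_(0 <= m < d.+1 - i) A i m =
    \sum_(0 <= i < d) (\sum_(0 <= m < d - i) A i m + A i (d - i)).
  apply: eq_big_nat => i /andP [_ hi].
  by rewrite subSn ?(ltnW hi) // big_nat_recr.
by rewrite big_split /= [in LHS]big_nat_recr //= subnn addrA.
Qed.

Let row_mono j m n : (m <= n)%N -> \sum_(0 <= i < m) A j i <= \sum_(0 <= i < n) A j i.
Proof. by rewrite !big_mkord; apply: series_mono. Qed.

Lemma cantor_series_mono m n : (m <= n)%N -> cantor_series m <= cantor_series n.
Proof.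
rewrite /cantor_series !big_mkord.
by apply: (series_mono (g := fun i => A (unpair i).1 (unpair i).2)).
Qed.

Lemma rectangle_le_cantor_series J M :
  \sum_(0 <= j < J) \sum_(0 <= m < M) A j m <= cantor_series (triangular (J + M)).
Proof.
rewrite cantor_series_triangular (big_cat_nat (leq0n J) (leq_addr M J)) /=.
apply: le_trans (_ : _ <= \sum_(0 <= j < J) \sum_(0 <= m < J + M - j) A j m) _.
  apply: ler_sum_nat => j /andP [_ hj]; apply: row_mono.
  by rewrite addnC -addnBA ?leq_addr // ltnW.
by rewrite lerDl; apply: sumr_ge0 => j _; apply: sumr_ge0.
Qed.

Variables (s : nat -> K) (l : K).
Hypothesis rows_cvg : forall j, cvgK (fun n => \sum_(0 <= m < n) A j m) (s j).
Hypothesis sum_rows_cvg : cvgK (fun n => \sum_(0 <= j < n) s j) l.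

Let row_le j n : \sum_(0 <= m < n) A j m <= s j.
Proof.
rewrite big_mkord; apply: series_le_cvg (A_ge0 j) _.
by apply: cvgK_ext (rows_cvg j) => k; rewrite /series big_mkord.
Qed.

Let s_ge0 j : 0 <= s j.
Proof. by apply: le_trans (row_le j 0); rewrite big_geq. Qed.

Let sum_rows_le n : \sum_(0 <= j < n) s j <= l.
Proof.
rewrite big_mkord; apply: series_le_cvg s_ge0 _.
by apply: cvgK_ext sum_rows_cvg => k; rewrite /series big_mkord.
Qed.

Lemma cantor_series_cvg : cvgK cantor_series l.
Proof.
apply: cvgK_squeeze => [e e0|n]; last first.
  apply: le_trans (cantor_series_mono (leq_triangular n)) _.
  rewrite cantor_series_triangular; apply: le_trans (sum_rows_le n).
  by apply: ler_sum => j _; apply: row_le.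
have e2 : 0 < e / 2 by rewrite divr_gt0.
have [J HJ] := sum_rows_cvg e2.
have hJ := lt_sub_of_dist (sum_rows_le J) (HJ J (leqnn J)).
pose e' := e / 2 / J.+1%:R.
have e'_gt0 : 0 < e' by rewrite divr_gt0.
have [M HM] : exists M, forall j, (j < J)%N -> s j - e' < \sum_(0 <= m < M) A j m.
  elim: (J) => [|J0 [M1 H1]]; first by exists 0%N.
  have [M2 H2] := rows_cvg J0 e'_gt0.
  exists (maxn M1 M2) => j; rewrite ltnS leq_eqVlt => /orP [/eqP ->|jJ].
    apply: lt_le_trans (row_mono _ (leq_maxr M1 M2)).
    exact: lt_sub_of_dist (row_le J0 M2) (H2 M2 (leqnn M2)).
  by apply: lt_le_trans (row_mono _ (leq_maxl M1 M2)); apply: H1.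
exists (triangular (J + M)) => n hn.
apply: lt_le_trans (cantor_series_mono hn); apply: lt_le_trans (rectangle_le_cantor_series J M).
apply: lt_le_trans (_ : \sum_(0 <= j < J) (s j - e') <= _); last first.
  by apply: ler_sum_nat => j /andP [_ hj]; apply: ltW; apply: HM.
rewrite sumrB sumr_const_nat subn0.
have Je'_le : e' *+ J <= e / 2.
  have -> : e / 2 = e' *+ J.+1 by rewrite /e' -mulr_natr; field; rewrite nat1r pnatr_eq0.
  by rewrite mulrS lerDr ltW.
apply: lt_le_trans (_ : \sum_(0 <= i < J) s i - e / 2 <= _); last by rewrite lerB.
by rewrite {1}(splitr e) opprD addrA ltrD2r.
Qed.

End CantorSeries.

Section ZeroFreeSubsequence.
Variables (K : numFieldType) (T : eqType) (t0 : T) (h : nat -> T).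

Definition zero_free_subseq (N : option nat) (v : nat -> T) : Prop :=
  (forall j, inJ N j -> v j != t0 /\ exists i, v j = h i) /\
  forall (F : T -> K) l, F t0 = 0 ->
    cvgK (series (fun i => F (h i))) l -> cvgK (psum N (fun j => F (v j))) l.

Lemma zero_free_subseq_finite m :
  (forall i, (m <= i)%N -> h i = t0) -> exists N v, zero_free_subseq N v.
Proof.
move=> h0; pose L := [seq x <- map h (iota 0 m) | x != t0].
exists (Some (size L)), (nth t0 L); split.
  move=> j /= hj; have : nth t0 L j \in L by rewrite mem_nth.
  by rewrite mem_filter => /andP [-> /mapP [i _ ->]]; split => //; exists i.
move=> F l F0 hl.
have sumL : \sum_(j < size L) F (nth t0 L j) = series (fun i => F (h i)) m.
  rewrite -(big_mkord xpredT (fun j => F (nth t0 L j))) -(big_nth t0 xpredT F).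
  rewrite big_filter big_mkcond big_map /series -(big_mkord xpredT (fun i => F (h i))).
  by rewrite /index_iota subn0; apply: eq_bigr => i _; case: eqP => // ->.
have -> : l = series (fun i => F (h i)) m.
  apply: cvgK_unique hl _ => e e0; exists m => n hn.
  by rewrite -(@series_zero_gap _ _ m n) ?subrr ?normr0 // => i /andP [/h0 -> _].
by move=> e e0; exists (size L) => n hn; rewrite psum_Some // sumL subrr normr0.
Qed.

(* The nonzero terms are enumerated by [nxt]: [sub k] is the index of the k-th
   nonzero term and [tau k] the length of the prefix of [h] containing the
   first k of them, so partial sums along [sub] are partial sums of [h]. *)
Lemma zero_free_subseq_infinite :
  (forall m, exists i, (m <= i)%N && (h i != t0)) -> exists N v, zero_free_subseq N v.
Proof.
move=> nz; pose nxt m := ex_minn (nz m).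
have nxtP m : [/\ (m <= nxt m)%N, h (nxt m) != t0 &
    forall i, (m <= i < nxt m)%N -> h i = t0].
  rewrite /nxt; case: ex_minnP => n /andP [mn hn] hmin; split => // i /andP [mi inn].
  by apply/eqP; apply: contraTT inn => hi; rewrite -leqNgt; apply: hmin; rewrite mi hi.
pose sub k := iter k (fun x => nxt x.+1) (nxt 0).
pose tau k := if k is k'.+1 then (sub k').+1 else nxt 0.
have sub_nz k : h (sub k) != t0.
  by case: k => [|k]; [case: (nxtP 0) | case: (nxtP (sub k).+1)].
have leq_tau k : (k <= tau k)%N.
  case: k => //= k; rewrite ltnS; elim: k => // k IH.
  by case: (nxtP (sub k).+1) => le _ _; apply: leq_trans le; rewrite ltnS.
exists None, (fun k => h (sub k)); split => [j _|F l F0 hl].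
  by split; [apply: sub_nz | exists (sub j)].
have series_sub k : series (fun j => F (h (sub j))) k = series (fun i => F (h i)) (tau k).
  elim: k => [|k IH].
    case: (nxtP 0) => _ _ gap; rewrite -(@series_zero_gap _ _ 0) // => [|i /gap ->] //.
    by rewrite /series !big_ord0.
  rewrite seriesS IH [tau k.+1]/= seriesS; congr (_ + _); case: k {IH} => //= k.
  by case: (nxtP (sub k).+1) => le _ gap; apply: series_zero_gap => // i /gap ->.
move=> e /hl [M HM]; exists M => k hk.
by rewrite [psum _ _ _]series_sub; apply: HM; apply: leq_trans hk (leq_tau k).
Qed.

Lemma exists_zero_free_subseq : exists N v, zero_free_subseq N v.
Proof.
have [[m h0]|] := pselect (exists m, forall i, (m <= i)%N -> h i = t0).
  exact: zero_free_subseq_finite h0.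
move=> fin; apply: zero_free_subseq_infinite => m; apply: contra_notP fin => nz.
by exists m => i mi; apply/eqP/negPn/negP => hi; apply: nz; exists i; rewrite mi hi.
Qed.

End ZeroFreeSubsequence.


Section InnerProduct.
Variables (K : numFieldType) (cj : K -> K) (V : lmodType K) (ip : V -> V -> K).
Hypothesis cjD : forall x y, cj (x + y) = cj x + cj y.
Hypothesis cjM : forall x y, cj (x * y) = cj x * cj y.
Hypothesis cjK : involutive cj.
Hypothesis mul_cj : forall z, z * cj z = `|z| ^+ 2.
Hypothesis cj_ge0 : forall r, 0 <= r -> cj r = r.
Hypothesis IP : inner_product cj ip.

Local Notation nsq := (nsq ip).
Local Notation cvgV := (cvgV ip).

Lemma cj0 : cj 0 = 0.
Proof. by apply: (addrI (cj 0)); rewrite -cjD !addr0. Qed.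

Lemma cjN x : cj (- x) = - cj x.
Proof. by apply: (addrI (cj x)); rewrite -cjD !subrr cj0. Qed.

Lemma norm_cj z : `|cj z| = `|z|.
Proof.
have h : `|cj z| ^+ 2 = `|z| ^+ 2 by rewrite -mul_cj cjK mulrC mul_cj.
by apply/eqP; rewrite -(eqrXn2 (_ : 0 < 2)%N) ?normr_ge0 // h.
Qed.

Lemma ipZlD a x y z : ip (a *: x + y) z = a * ip x z + ip y z.
Proof. by case: IP. Qed.
Lemma ipC x y : ip x y = cj (ip y x).
Proof. by case: IP. Qed.
Lemma nsq_ge0 x : 0 <= nsq x.
Proof. by case: IP => _ _ + _; apply. Qed.
Lemma nsq_eq0 x : nsq x = 0 -> x = 0.
Proof. by case: IP => _ _ _; apply. Qed.

Lemma ip0l z : ip 0 z = 0.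
Proof.
have h := ipZlD 1 0 0 z; rewrite scaler0 addr0 mul1r in h.
by apply: (addrI (ip 0 z)); rewrite addr0 -{1}h.
Qed.
Lemma ipDl x y z : ip (x + y) z = ip x z + ip y z.
Proof. by have := ipZlD 1 x y z; rewrite scale1r mul1r. Qed.
Lemma ipZl a x z : ip (a *: x) z = a * ip x z.
Proof. by have := ipZlD a x 0 z; rewrite !addr0 ip0l addr0. Qed.
Lemma ipNl x z : ip (- x) z = - ip x z.
Proof. by rewrite -scaleN1r ipZl mulN1r. Qed.
Lemma ipBl x y z : ip (x - y) z = ip x z - ip y z.
Proof. by rewrite ipDl ipNl. Qed.
Lemma ip0r z : ip z 0 = 0.
Proof. by rewrite ipC ip0l cj0. Qed.
Lemma ipDr x y z : ip z (x + y) = ip z x + ip z y.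
Proof. by rewrite ipC ipDl cjD -!ipC. Qed.
Lemma ipZr a x z : ip z (a *: x) = cj a * ip z x.
Proof. by rewrite ipC ipZl cjM -ipC. Qed.
Lemma ipNr x z : ip z (- x) = - ip z x.
Proof. by rewrite ipC ipNl cjN -ipC. Qed.
Lemma ipBr x y z : ip z (x - y) = ip z x - ip z y.
Proof. by rewrite ipDr ipNr. Qed.

Lemma ip_suml I r (P : pred I) (F : I -> V) z :
  ip (\sum_(i <- r | P i) F i) z = \sum_(i <- r | P i) ip (F i) z.
Proof. exact: (big_morph (ip^~ z) (fun x y => ipDl x y z) (ip0l z)). Qed.
Lemma ip_sumr I r (P : pred I) (F : I -> V) z :
  ip z (\sum_(i <- r | P i) F i) = \sum_(i <- r | P i) ip z (F i).
Proof. exact: (big_morph (ip z) (fun x y => ipDr x y z) (ip0r z)). Qed.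

Lemma ip_mulC x y : ip x y * ip y x = `|ip x y| ^+ 2.
Proof. by rewrite [ip y x]ipC mul_cj. Qed.

Lemma nsq_norm x : `|nsq x| = nsq x.
Proof. exact: ger0_norm (nsq_ge0 x). Qed.
Lemma nsqN x : nsq (- x) = nsq x.
Proof. by rewrite /nsq ipNl ipNr opprK. Qed.
Lemma nsq_distC x y : nsq (x - y) = nsq (y - x).
Proof. by rewrite -nsqN opprB. Qed.
Lemma nsqD x y : nsq (x + y) = nsq x + nsq y + ip x y + ip y x.
Proof. by rewrite /nsq ipDl !ipDr; ring. Qed.

Lemma nsqD_le x y : nsq (x + y) <= 2 * (nsq x + nsq y).
Proof.
have parallelogram : nsq (x + y) + nsq (x - y) = 2 * (nsq x + nsq y).
  by rewrite /nsq !ipDl !ipDr !ipNl !ipNr; ring.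
by rewrite -parallelogram lerDl nsq_ge0.
Qed.

Lemma cauchy_schwarz x y : `|ip x y| ^+ 2 <= nsq x * nsq y.
Proof.
have [->|y0] := eqVneq y 0; first by rewrite ip0r normr0 expr0n /= /nsq ip0r mulr0.
have nyp : 0 < nsq y by rewrite lt0r nsq_ge0 andbT; apply: contra y0 => /eqP/nsq_eq0 ->.
set a := ip x y; set ny := nsq y.
have := nsq_ge0 (x - (a / ny) *: y).
rewrite /nsq ipBl !ipBr !ipZl !ipZr -/a [ip y x]ipC -/(nsq x) -/(nsq y) -/ny.
rewrite cjM (@cj_ge0 ny^-1); last by rewrite invr_ge0 ltW.
have -> : nsq x - cj a / ny * a - (a / ny * cj a - a / ny * (cj a / ny * ny)) =
   nsq x - (a * cj a) / ny by field; rewrite gt_eqF.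
by rewrite mul_cj subr_ge0 ler_pdivrMr.
Qed.

Lemma cvgV_ext (u v : nat -> V) l : u =1 v -> cvgV u l -> cvgV v l.
Proof. by move=> uv H e e0; have [M HM] := H e e0; exists M => n /HM; rewrite uv. Qed.

Lemma cvgV_unique (u : nat -> V) a b : cvgV u a -> cvgV u b -> a = b.
Proof.
move=> ha hb; apply/eqP; rewrite -subr_eq0; apply/eqP/nsq_eq0.
apply: ge0_lt_all_eq0 (nsq_ge0 _) _ => e e0.
have e4 : 0 < e / 4 by rewrite divr_gt0.
have [N1 H1] := ha _ e4; have [N2 H2] := hb _ e4.
have := H1 (maxn N1 N2) (leq_maxl _ _); have := H2 (maxn N1 N2) (leq_maxr _ _).
rewrite !nsq_norm; set w := u _ => h2 h1.
apply: le_lt_trans (_ : _ <= 2 * (nsq (a - w) + nsq (w - b))) _.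
  by have := nsqD_le (a - w) (w - b); rewrite addrA subrK.
rewrite nsq_distC; apply: lt_le_trans (_ : _ < 2 * (e / 4 + e / 4)) _.
  by rewrite ltr_pM2l // ltrD.
by rewrite le_eqVlt; apply/orP; left; apply/eqP; field.
Qed.

Lemma cvgVD (u v : nat -> V) a b : cvgV u a -> cvgV v b ->
  cvgV (fun n => u n + v n) (a + b).
Proof.
move=> ha hb e e0.
have e4 : 0 < e / 4 by rewrite divr_gt0.
have [N1 H1] := ha _ e4; have [N2 H2] := hb _ e4.
exists (maxn N1 N2) => n hn.
have := H1 n (leq_trans (leq_maxl _ _) hn); have := H2 n (leq_trans (leq_maxr _ _) hn).
rewrite !nsq_norm => h2 h1; rewrite opprD addrACA.
apply: le_lt_trans (nsqD_le _ _) _.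
apply: lt_le_trans (_ : _ < 2 * (e / 4 + e / 4)) _.
  by rewrite ltr_pM2l // ltrD.
by rewrite le_eqVlt; apply/orP; left; apply/eqP; field.
Qed.

Lemma cvgV_ipl (u : nat -> V) a z : cvgV u a -> cvgK (fun n => ip (u n) z) (ip a z).
Proof.
move=> ha e e0.
have nz0 : 0 < nsq z + 1 by rewrite ltr_pwDr ?nsq_ge0.
have [N H] := ha _ (divr_gt0 (exprn_gt0 2 e0) nz0).
exists N => n /H; rewrite nsq_norm => h.
rewrite -(ltr_pXn2r (_ : 0 < 2)%N) ?nnegrE ?normr_ge0 ?ltW // -ipBl.
apply: le_lt_trans (cauchy_schwarz _ _) _.
apply: le_lt_trans (_ : _ <= e ^+ 2 / (nsq z + 1) * nsq z) _.
  by rewrite ler_wpM2r ?nsq_ge0 ?ltW.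
by rewrite -mulrA gtr_pMr ?exprn_gt0 // mulrC ltr_pdivrMr // mul1r ltrDl.
Qed.

Lemma cvgV_ipr (u : nat -> V) a z : cvgV u a -> cvgK (fun n => ip z (u n)) (ip z a).
Proof.
move=> /(@cvgV_ipl _ _ z) ha e /ha [N H]; exists N => n hn.
by rewrite (ipC z) (ipC z a) -cjN -cjD norm_cj; apply: H.
Qed.

Lemma sym_quadratic0_eq0 (Q : V -> V) :
  (forall x y, Q (x + y) = Q x + Q y) -> (forall x y, ip (Q x) y = ip x (Q y)) ->
  (forall x, ip (Q x) x = 0) -> forall x, Q x = 0.
Proof.
move=> QD Qsa Q0 x; apply: nsq_eq0.
have := Q0 (x + Q x); rewrite QD !ipDl !ipDr Q0 (Q0 (Q x)) (Qsa (Q x)) add0r addr0.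
by rewrite -mulr2n => /eqP; rewrite mulrn_eq0 /= => /eqP.
Qed.

Section FrameOperator.
Variables (N : option nat) (u : nat -> V) (S : V -> V) (B : K).
Hypothesis SD : forall x y, S (x + y) = S x + S y.
Hypothesis S_sym : forall x y, ip (S x) y = ip x (S y).
Hypothesis S_quadratic :
  forall w, cvgK (psum N (fun j => `|ip w (u j)| ^+ 2)) (ip (S w) w).
Hypothesis B_gt0 : 0 < B.
Hypothesis S_bounded : forall w, ip (S w) w <= B * nsq w.
Hypothesis complete : forall x : nat -> V, cauchyV ip x -> exists l, cvgV x l.

Let c w j := if inJ N j then ip w (u j) else 0.
Let a w j := `|c w j| ^+ 2.
Let X w := psumV N (fun j => ip w (u j) *: u j).

Let a_ge0 w j : 0 <= a w j.
Proof. exact: exprn_ge0. Qed.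

Let psum_a w n : psum N (fun j => `|ip w (u j)| ^+ 2) n = \sum_(0 <= j < n) a w j.
Proof.
rewrite /psum big_mkcond big_mkord; apply: eq_bigr => j _.
by rewrite /a /c; case: inJ; rewrite ?normr0 ?expr0n.
Qed.

Let X_block w m n : (m <= n)%N -> X w n - X w m = \sum_(m <= j < n) c w j *: u j.
Proof.
have Xc k : X w k = \sum_(0 <= j < k) c w j *: u j.
  rewrite /X /psumV big_mkcond big_mkord; apply: eq_bigr => j _.
  by rewrite /c; case: inJ; rewrite ?scale0r.
by move=> mn; rewrite !Xc (big_cat_nat (leq0n m) mn) /= addrAC subrr add0r.
Qed.

Let block_le w m n : \sum_(m <= j < n) a w j <= B * nsq w.
Proof.
have hc : cvgK (series (a w)) (ip (S w) w).
  by apply: cvgK_ext (S_quadratic w) => k; rewrite psum_a /series big_mkord.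
apply: le_trans (S_bounded w); apply: le_trans (series_le_cvg n (a_ge0 w) hc).
rewrite /series -(big_mkord xpredT (a w)).
have [mn|nm] := leqP m n; last first.
  rewrite [X in X <= _]big_geq ?(ltnW nm) //; apply: sumr_ge0 => j _; apply: a_ge0.
by rewrite (big_cat_nat (leq0n m) mn) /= lerDr; apply: sumr_ge0 => j _; apply: a_ge0.
Qed.

(* Bessel-type bound on a block of the frame expansion: with x the block and
   d_j = <x, u_j>, one has ||x||^2 <= sum |c_j| |d_j| and sum |d_j|^2 <= B ||x||^2,
   and AM-GM in the form 2 B |c| |d| <= B^2 |c|^2 + |d|^2 eliminates d. *)
Let bessel_block w m n :
  nsq (\sum_(m <= j < n) c w j *: u j) <= B * \sum_(m <= j < n) a w j.
Proof.
set x := \sum_(m <= j < n) _; set A := \sum_(m <= j < n) a w j.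
pose d j := if inJ N j then ip x (u j) else 0.
have x_le : nsq x <= \sum_(m <= j < n) `|c w j| * `|d j|.
  rewrite -nsq_norm {1}/nsq {1}/x ip_suml; apply: le_trans (ler_norm_sum _ _ _) _.
  apply: ler_sum => j _; rewrite ipZl normrM [ip (u j) x]ipC norm_cj /c /d.
  by case: inJ; rewrite ?mul0r ?normr0 ?mul0r.
have d_le : \sum_(m <= j < n) `|d j| ^+ 2 <= B * nsq x.
  by apply: le_trans (block_le x m n); apply: ler_sum => j _; rewrite /a /c /d; case: inJ.
have amgm j : 2 * B * (`|c w j| * `|d j|) <= B ^+ 2 * a w j + `|d j| ^+ 2.
  rewrite -subr_ge0.
  have -> : B ^+ 2 * a w j + `|d j| ^+ 2 - 2 * B * (`|c w j| * `|d j|) =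
    (B * `|c w j| - `|d j|) ^+ 2 by rewrite /a; ring.
  by rewrite real_exprn_even_ge0 // realB // ?realM ?ger0_real // ltW.
have sum_amgm : 2 * B * nsq x <= B ^+ 2 * A + B * nsq x.
  apply: le_trans (_ : 2 * B * \sum_(m <= j < n) `|c w j| * `|d j| <= _).
    by rewrite ler_wpM2l // mulr_ge0 // ltW.
  rewrite mulr_sumr /A mulr_sumr -[X in _ <= X + _]mulr_sumr.
  apply: le_trans (_ : _ <= \sum_(m <= j < n) (B ^+ 2 * a w j + `|d j| ^+ 2)) _.
    exact: ler_sum.
  by rewrite big_split /= -mulr_sumr lerD2l.
rewrite -(ler_pM2l B_gt0) -(lerD2r (B * nsq x)) mulrA -expr2.
by apply: le_trans sum_amgm; rewrite -mulrDl -mulr2n mulr_natl.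
Qed.

Let cauchy_X w : cauchyV ip (X w).
Proof.
move=> e e0; have [M H] := S_quadratic w (divr_gt0 (divr_gt0 e0 B_gt0) (ltr0Sn _ 1)).
exists M => m n; wlog mn : m n / (m <= n)%N.
  move=> W hm hn; have [/W|/ltnW/W] := leqP m n; first exact.
  by rewrite nsq_distC; apply.
move=> hm hn; rewrite nsq_norm nsq_distC X_block //.
apply: le_lt_trans (bessel_block w m n) _.
rewrite -ltr_pdivlMl // mulrC.
have := H n hn; have := H m hm; rewrite !psum_a.
rewrite (big_cat_nat (leq0n m) mn) /=; set sm := \sum_(0 <= j < m) a w j.
set A := \sum_(m <= j < n) a w j => hsm hsn.
have A_real : A \is Num.real by rewrite ger0_real // sumr_ge0.
apply: le_lt_trans (real_ler_norm A_real) _.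
have -> : A = (sm + A - ip (S w) w) - (sm - ip (S w) w) by ring.
by apply: le_lt_trans (ler_normB _ _) _; rewrite (splitr (e / B)) ltrD.
Qed.

Let X_sym w z n : ip (X w n) z = ip w (X z n).
Proof.
rewrite /X /psumV ip_suml ip_sumr; apply: eq_bigr => j _.
by rewrite ipZl ipZr mulrC [ip (u j) z]ipC.
Qed.

Let X_quadratic w n : ip (X w n) w = psum N (fun j => `|ip w (u j)| ^+ 2) n.
Proof. by rewrite /X /psumV ip_suml; apply: eq_bigr => j _; rewrite ipZl ip_mulC. Qed.

Let XD w z n : X (w + z) n = X w n + X z n.
Proof. by rewrite /X /psumV -big_split; apply: eq_bigr => j _; rewrite ipDl scalerDl. Qed.

Lemma frame_operator_of_quadratic : is_frame_operator ip N u S.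
Proof.
have [L HL] := choice (fun w => complete (cauchy_X w)).
suff LS w : L w - S w = 0 by move=> w; move/eqP: (LS w); rewrite subr_eq0 => /eqP <-; exact: HL.
apply: (@sym_quadratic0_eq0 (fun w => L w - S w)) => [x y|x y|x].
- have -> : L (x + y) = L x + L y.
    by apply: cvgV_unique (HL _) _; apply: cvgV_ext (cvgVD (HL x) (HL y)) => n; rewrite XD.
  by rewrite SD opprD addrACA.
- rewrite ipBl ipBr S_sym; congr (_ - _).
  apply: cvgK_unique (cvgV_ipl y (HL x)) _.
  by apply: cvgK_ext (cvgV_ipr x (HL y)) => n; rewrite X_sym.
- apply/eqP; rewrite ipBl subr_eq0; apply/eqP.
  apply: cvgK_unique (cvgV_ipl x (HL x)) _.
  by apply: cvgK_ext (S_quadratic x) => n; rewrite X_quadratic.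
Qed.

End FrameOperator.

Lemma proj_dist_le (P : {linear V -> V}) x y :
  (forall z, P (P z) = P z) -> (forall z t, ip (P z) t = ip z (P t)) ->
  P x = x -> nsq (x - P y) <= nsq (x - y).
Proof.
move=> PP Psym Px; have -> : x - P y = P (x - y) by rewrite linearB /= Px.
set z := x - y.
have Pz_orth : ip (P z) (z - P z) = 0 by rewrite ipBr -[ip (P z) (P z)]Psym PP subrr.
have Pz_orth' : ip (z - P z) (P z) = 0.
  by rewrite ipBl -[ip (P z) (P z)]Psym PP -Psym subrr.
by rewrite -{2}(subrK (P z) z) nsqD Pz_orth Pz_orth' !addr0 lerDr nsq_ge0.
Qed.

Section GramSchmidt.
Variable sq : K -> K.
Hypothesis sq_ge0 : forall r, 0 <= sq r.
Hypothesis sqK : forall r, 0 <= r -> sq r ^+ 2 = r.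
Variables (P : {linear V -> V}) (d : nat -> V).
Hypothesis PP : forall x, P (P x) = P x.
Hypothesis P_sym : forall x y, ip (P x) y = ip x (P y).
Hypothesis d_dense : forall x e, 0 < e -> exists n, `|nsq (x - d n)| < e.

Definition normalize (x : V) : V := if x == 0 then 0 else (sq (nsq x))^-1 *: x.

(* Gram-Schmidt on P d_0, P d_1, ...; a vector lying in the span of its
   predecessors yields [normalize 0 = 0]. *)
Fixpoint gs_seq n : seq V :=
  if n is n'.+1 then
    rcons (gs_seq n') (normalize (P (d n') - \sum_(e <- gs_seq n') ip (P (d n')) e *: e))
  else [::].
Definition gs n := nth 0 (gs_seq n.+1) n.

Lemma size_gs_seq n : size (gs_seq n) = n.
Proof. by elim: n => //= n IH; rewrite size_rcons IH. Qed.

Lemma gsE n : gs n = normalize (P (d n) - \sum_(e <- gs_seq n) ip (P (d n)) e *: e).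
Proof. by rewrite /gs /= nth_rcons size_gs_seq ltnn eqxx. Qed.

Lemma gs_seqS n : gs_seq n.+1 = rcons (gs_seq n) (gs n).
Proof. by rewrite gsE. Qed.

Lemma big_gs_seq (F : V -> V) n : \sum_(e <- gs_seq n) F e = \sum_(m < n) F (gs m).
Proof.
elim: n => [|n IH]; first by rewrite big_nil big_ord0.
by rewrite gs_seqS big_rcons big_ord_recr /= IH addrC.
Qed.

Let sq_nsq_neq0 x : x != 0 -> sq (nsq x) != 0.
Proof.
move=> x0; apply: contra x0 => /eqP h; apply/eqP/nsq_eq0.
by rewrite -(sqK (nsq_ge0 x)) h expr0n.
Qed.

Lemma normalizeK x : sq (nsq x) *: normalize x = x.
Proof.
rewrite /normalize; case: eqP => [->|/eqP/sq_nsq_neq0 x0]; first by rewrite scaler0.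
by rewrite scalerA mulfV ?scale1r.
Qed.

Lemma normalize_unit_or0 x : normalize x = 0 \/ nsq (normalize x) = 1.
Proof.
rewrite /normalize; case: eqP => [_|/eqP x0]; [by left | right].
have s0 := sq_nsq_neq0 x0; set s := sq (nsq x) in s0 *.
have nsqE : nsq x = s ^+ 2 by rewrite sqK ?nsq_ge0.
rewrite /nsq ipZl ipZr cj_ge0 ?invr_ge0 ?sq_ge0 // -/(nsq x) nsqE.
by field.
Qed.

Lemma gs_unit_or0 n : gs n = 0 \/ nsq (gs n) = 1.
Proof. by rewrite gsE; apply: normalize_unit_or0. Qed.

Lemma P_gs n : P (gs n) = gs n.
Proof.
elim/ltn_ind: n => n IH; rewrite gsE /normalize; case: eqP => _; first exact: linear0.
rewrite linearZ; congr (_ *: _); rewrite linearB /= PP; congr (_ - _).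
by rewrite !big_gs_seq linear_sum; apply: eq_bigr => i _; rewrite linearZ /= IH.
Qed.

Let gs_orthogonal_lt n m : (m < n)%N -> ip (gs n) (gs m) = 0.
Proof.
elim/ltn_ind: n m => n IH m mn.
rewrite gsE /normalize; case: eqP => _; first by rewrite ip0l.
set s := (sq _)^-1; rewrite ipZl ipBl big_gs_seq ip_suml (bigD1 (Ordinal mn)) //= ipZl.
rewrite big1 => [|i /negbTE ne]; last first.
  rewrite ipZl; have [lt_im|lt_mi|eq_im] := ltngtP i m.
  - by rewrite [ip (gs i) _]ipC IH ?cj0 ?mulr0.
  - by rewrite IH ?mulr0.
  - by move: ne; rewrite -(inj_eq val_inj) /= => /negbT/eqP /(_ eq_im).
rewrite addr0 -/(nsq (gs m)).
by case: (gs_unit_or0 m) => ->; rewrite ?ip0r ?mul0r ?mulr1 subrr mulr0.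
Qed.

Lemma gs_orthogonal i j : i != j -> ip (gs i) (gs j) = 0.
Proof.
move=> ij; have [lt_ij|lt_ji|eq_ij] := ltngtP i j.
- by rewrite ipC gs_orthogonal_lt // cj0.
- by rewrite gs_orthogonal_lt.
- by rewrite eq_ij eqxx in ij.
Qed.

Lemma proj_dense_span n : exists a : nat -> K, P (d n) = \sum_(m < n.+1) a m *: gs m.
Proof.
set v := P (d n); set r := v - \sum_(e <- gs_seq n) ip v e *: e.
exists (fun m => if (m < n)%N then ip v (gs m) else sq (nsq r)).
rewrite big_ord_recr /= ltnn [gs n]gsE -/v -/r normalizeK.
under eq_bigr do rewrite ltn_ord.
by rewrite /r big_gs_seq addrC subrK.
Qed.

Let fourier x n := \sum_(m < n) ip x (gs m) *: gs m.

Let ip_gs_fourier x m n : (m < n)%N -> ip (gs m) (fourier x n) = cj (ip x (gs m)).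
Proof.
move=> mn; rewrite ip_sumr (bigD1 (Ordinal mn)) //= ipZr big1 => [|i ne]; last first.
  by rewrite ipZr gs_orthogonal ?mulr0 //; apply: contra ne => /eqP mi; apply/eqP/val_inj.
rewrite addr0 -/(nsq (gs m)).
by case: (gs_unit_or0 m) => ->; rewrite ?ip0r ?cj0 ?mul0r ?mulr1.
Qed.

Let fourier_residual_orth x n (b : nat -> K) :
  ip (x - fourier x n) (\sum_(i < n) b i *: gs i) = 0.
Proof.
rewrite ip_sumr big1 // => i _.
by rewrite ipZr ipBl [ip (fourier x n) _]ipC ip_gs_fourier // cjK subrr mulr0.
Qed.

Let nsq_fourier_residual x n :
  nsq (x - fourier x n) = nsq x - series (fun m => `|ip x (gs m)| ^+ 2) n.
Proof.
rewrite {1}/nsq ipBr (fourier_residual_orth x n (fun m => ip x (gs m))) subr0 ipBl.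
by congr (_ - _); rewrite ip_suml; apply: eq_bigr => i _; rewrite ipZl ip_mulC.
Qed.

Let fourier_best x n (b : nat -> K) :
  nsq (x - fourier x n) <= nsq (x - \sum_(i < n) b i *: gs i).
Proof.
have -> : x - \sum_(i < n) b i *: gs i =
    (x - fourier x n) + \sum_(i < n) (ip x (gs i) - b i) *: gs i.
  have -> : \sum_(i < n) (ip x (gs i) - b i) *: gs i =
      fourier x n - \sum_(i < n) b i *: gs i.
    by rewrite -sumrB; apply: eq_bigr => i _; rewrite scalerBl.
  by rewrite addrA subrK.
have orth := fourier_residual_orth x n (fun i => ip x (gs i) - b i).
rewrite [X in _ <= X]nsqD orth [ip (\sum_(i < n) _) _]ipC orth cj0 !addr0.
by rewrite lerDl nsq_ge0.
Qed.

(* Parseval's identity for the range of P: the finite Fourier sums of P w are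
   best approximations from spans that contain P (d i), and P (d i) is as
   close to P w as d i is to w. *)
Lemma gs_parseval w : cvgK (series (fun m => `|ip w (gs m)| ^+ 2)) (ip (P w) w).
Proof.
set x := P w.
have ipx m : ip w (gs m) = ip x (gs m) by rewrite /x P_sym P_gs.
have nsqx : nsq x = ip (P w) w by rewrite /nsq /x P_sym PP.
suff: cvgK (series (fun m => `|ip x (gs m)| ^+ 2)) (nsq x).
  by rewrite nsqx; apply: cvgK_ext => n; apply: eq_bigr => m _; rewrite ipx.
apply: cvgK_squeeze => [e e0|n]; last first.
  by rewrite -subr_ge0 -nsq_fourier_residual nsq_ge0.
have [i hi] := d_dense x e0; exists i.+1 => n hn.
rewrite ltrBlDr addrC -ltrBlDr -nsq_fourier_residual.
apply: le_lt_trans (_ : _ <= nsq (x - fourier x i.+1)) _.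
  rewrite !nsq_fourier_residual lerD2l lerN2.
  by apply: series_mono => // m; exact: exprn_ge0.
have [a ha] := proj_dense_span i; apply: le_lt_trans (fourier_best _ _ a) _.
rewrite -ha; apply: le_lt_trans (proj_dist_le (d i) PP P_sym (PP w)) _.
by rewrite -nsq_norm.
Qed.

End GramSchmidt.
Definition unit_family (N : option nat) (u : nat -> V) := forall j, inJ N j -> nsq (u j) = 1.

Definition weak_frame_operator (N : option nat) (u : nat -> V) (A : V -> V) :=
  forall w, cvgK (psum N (fun j => `|ip w (u j)| ^+ 2)) (ip (A w) w).

Definition rank1 (e x : V) : V := ip x e *: e.

Lemma rank1_linear e : linear (rank1 e).
Proof. by move=> a x y; rewrite /rank1 ipZlD scalerDl scalerA. Qed.

HB.instance Definition _ e := GRing.isLinear.Build K V V *:%R (rank1 e) (rank1_linear e).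

Definition rank1L (e : V) : {linear V -> V} := GRing.Linear.clone K V V *:%R (rank1 e) _.

Lemma rank1_sa_projection e : nsq e = 1 -> sa_projection ip (rank1L e).
Proof.
move=> e1; split => [x|x y] /=; rewrite /rank1.
  by rewrite ipZl -/(nsq e) e1 mulr1.
by rewrite ipZl ipZr -ipC mulrC.
Qed.

Lemma bounded_op_ge1 (A : V -> V) :
  bounded_op ip A -> exists2 B, 1 <= B & forall x, nsq (A x) <= B * nsq x.
Proof.
move=> [M HM]; exists (`|M| + 1) => [|x]; first by rewrite lerDr.
have hx := HM x; rewrite !nsq_norm in hx.
have Mx : 0 <= M * nsq x by apply: le_trans (nsq_ge0 _) hx.
apply: le_trans hx _.
rewrite -(ger0_norm Mx) normrM nsq_norm ler_wpM2r ?nsq_ge0 //.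
by rewrite lerDl.
Qed.

Section ProjectionDecomposition.
Hypothesis complete : forall x : nat -> V, cauchyV ip x -> exists l, cvgV x l.

Lemma unit_frame_projection_decomposition (A : V -> V) N u B :
  (forall x y, A (x + y) = A x + A y) -> (forall x y, ip (A x) y = ip x (A y)) ->
  0 < B -> (forall w, ip (A w) w <= B * nsq w) ->
  unit_family N u -> weak_frame_operator N u A -> projection_decomposition ip A.
Proof.
move=> AD A_sym B_gt0 A_bounded u1 Au; exists N, (fun j => rank1L (u j)); split.
  by move=> j /u1; apply: rank1_sa_projection.
exact: (frame_operator_of_quadratic AD A_sym Au B_gt0 A_bounded complete).
Qed.

Variables (sq : K -> K) (d : nat -> V).
Hypothesis sq_ge0 : forall r, 0 <= sq r.
Hypothesis sqK : forall r, 0 <= r -> sq r ^+ 2 = r.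
Hypothesis d_dense : forall x e, 0 < e -> exists n, `|nsq (x - d n)| < e.

Lemma projection_decomposition_unit_frame (A : V -> V) :
  projection_decomposition ip A -> exists N u, unit_family N u /\ weak_frame_operator N u A.
Proof.
move=> [N0 [P [P_proj P_sum]]].
pose F j m := if inJ N0 j then gs sq (P j) d m else 0.
pose h i := F (unpair i).1 (unpair i).2.
have h_unit_or0 i : h i = 0 \/ nsq (h i) = 1.
  rewrite /h /F; case: inJ; [exact: gs_unit_or0 | by left].
have h_quad w : cvgK (series (fun i => `|ip w (h i)| ^+ 2)) (ip (A w) w).
  pose s j := if inJ N0 j then ip (P j w) w else 0.
  have rows j : cvgK (fun n => \sum_(0 <= m < n) `|ip w (F j m)| ^+ 2) (s j).
    rewrite /s /F; case hj : (inJ N0 j); last first.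
      by move=> e e0; exists 0%N => n _; rewrite big1 ?subrr ?normr0 // => m _; rewrite ip0r normr0 expr0n.
    have [PP P_sym] := P_proj j hj.
    apply: cvgK_ext (gs_parseval sq_ge0 sqK PP P_sym d_dense w) => n.
    by rewrite /series big_mkord.
  have sum_rows : cvgK (fun n => \sum_(0 <= j < n) s j) (ip (A w) w).
    apply: cvgK_ext (cvgV_ipl w (P_sum w)) => n.
    rewrite /psumV ip_suml big_mkord big_mkcond /=.
    by apply: eq_bigr => j _; rewrite /s; case: inJ.
  have A_ge0 j m : 0 <= `|ip w (F j m)| ^+ 2 by apply: exprn_ge0.
  have flat := cantor_series_cvg A_ge0 rows sum_rows.
  apply: cvgK_ext flat => n.
  by rewrite /cantor_series /series big_mkord.
have [N [u [u_nz u_cvg]]] := exists_zero_free_subseq K 0 h.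
exists N, u; split => [j /u_nz [u0 [i ui]]|w].
  by move: u0; rewrite ui; case: (h_unit_or0 i) => ->; rewrite ?eqxx.
by apply: (u_cvg (fun x => `|ip w x| ^+ 2)) (h_quad w); rewrite ip0r normr0 expr0n.
Qed.

End ProjectionDecomposition.

Section Ellipsoid.
Variables (T : {linear V -> V}) (Tinv : V -> V) (k : K).
Hypothesis T_sym : self_adjoint ip T.
Hypotheses (TK : cancel T Tinv) (TinvK : cancel Tinv T).
Hypothesis k_gt0 : 0 < k.

Let Rop w := k *: Tinv (Tinv w).

Let Tinv_sym x y : ip (Tinv x) y = ip x (Tinv y).
Proof. by rewrite -{1}(TinvK y) -T_sym TinvK. Qed.

Let TinvD x y : Tinv (x + y) = Tinv x + Tinv y.
Proof. by apply: (can_inj TK); rewrite linearD /= !TinvK. Qed.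

Let RopD x y : Rop (x + y) = Rop x + Rop y.
Proof. by rewrite /Rop !TinvD scalerDr. Qed.

Let Rop_sym x y : ip (Rop x) y = ip x (Rop y).
Proof. by rewrite /Rop ipZl ipZr cj_ge0 ?ltW // !Tinv_sym. Qed.

Let Rop_quadratic w : ip (Rop w) w = k * nsq (Tinv w).
Proof. by rewrite /Rop ipZl Tinv_sym. Qed.

Lemma ellipsoid_unit y : in_ellipsoid ip T y -> nsq (Tinv y) = 1.
Proof. by case=> x [x1 ->]; rewrite TK. Qed.

Lemma tight_frame_weak_frame_operator N y :
  (forall j, inJ N j -> in_ellipsoid ip T (y j)) -> is_tight_frame ip N y k ->
  weak_frame_operator N (fun j => Tinv (y j)) Rop.
Proof.
move=> y_ell y_tight w; rewrite Rop_quadratic.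
apply: cvgK_ext (y_tight (Tinv w)) => n; apply: eq_bigr => j /y_ell [x [_ ->]].
by rewrite TK -T_sym TinvK.
Qed.

Lemma weak_frame_operator_tight_frame N u :
  unit_family N u -> weak_frame_operator N u Rop ->
  (forall j, inJ N j -> in_ellipsoid ip T (T (u j))) /\
  is_tight_frame ip N (fun j => T (u j)) k.
Proof.
move=> u1 Ru; split => [j /u1 uj1|w]; first by exists (u j).
have := Ru (T w); rewrite Rop_quadratic TK.
by apply: cvgK_ext => n; apply: eq_bigr => j _; rewrite T_sym.
Qed.

Hypothesis T_bounded : bounded_op ip T.
Hypothesis Tinv_bounded : bounded_op ip Tinv.
Hypothesis complete : forall x : nat -> V, cauchyV ip x -> exists l, cvgV x l.

Let Rop_bounded : exists2 B, k <= B & forall w, ip (Rop w) w <= B * nsq w.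
Proof.
have [B B1 HB] := bounded_op_ge1 Tinv_bounded.
exists (k * B) => [|w]; first exact: ler_peMr (ltW k_gt0) B1.
by rewrite Rop_quadratic -mulrA (ler_wpM2l (ltW k_gt0)).
Qed.

Lemma tight_frame_projection_decomposition N y :
  (forall j, inJ N j -> in_ellipsoid ip T (y j)) -> is_tight_frame ip N y k ->
  projection_decomposition ip Rop.
Proof.
move=> y_ell y_tight; have [B kB HB] := Rop_bounded.
have B_gt0 := lt_le_trans k_gt0 kB.
apply: (unit_frame_projection_decomposition complete RopD Rop_sym B_gt0 HB).
  by move=> j /y_ell; apply: ellipsoid_unit.
exact: tight_frame_weak_frame_operator.
Qed.

Lemma tight_frame_pullback N y :
  (forall j, inJ N j -> in_ellipsoid ip T (y j)) -> is_tight_frame ip N y k ->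
  [/\ forall j, inJ N j -> nsq (Tinv (y j)) = 1,
      is_frame ip N (fun j => Tinv (y j)) &
      is_frame_operator ip N (fun j => Tinv (y j)) Rop].
Proof.
move=> y_ell y_tight; have Ry := tight_frame_weak_frame_operator y_ell y_tight.
have [B kB HB] := Rop_bounded; have B_gt0 := lt_le_trans k_gt0 kB.
have [Bt Bt1 HBt] := bounded_op_ge1 T_bounded; have Bt_gt0 := lt_le_trans ltr01 Bt1.
split => [j /y_ell /ellipsoid_unit //||].
- exists (k / Bt), B; split => [||w]; first by rewrite divr_gt0.
    by apply: le_trans kB; rewrite ler_pdivrMr //; apply: ler_peMr (ltW k_gt0) Bt1.
  exists (ip (Rop w) w); split; first exact: Ry.
  rewrite HB andbT Rop_quadratic mulrAC ler_pdivrMr // -mulrA ler_wpM2l ?(ltW k_gt0) //.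
  by rewrite mulrC -{1}(TinvK w) HBt.
- exact: (frame_operator_of_quadratic RopD Rop_sym Ry B_gt0 HB complete).
Qed.

End Ellipsoid.

Lemma ellipsoid_tight_frame_iff (sq : K -> K) :
  (forall r, 0 <= sq r) -> (forall r, 0 <= r -> sq r ^+ 2 = r) ->
  separable_hilbert cj ip ->
  forall (T : {linear V -> V}) (Tinv : V -> V),
  positive_op ip T -> cancel T Tinv -> cancel Tinv T -> bounded_op ip Tinv ->
  forall k : K, 0 < k ->
  let Rop := fun w => k *: Tinv (Tinv w) in
  ((exists (N : option nat) (y : nat -> V),
      (forall j, inJ N j -> in_ellipsoid ip T (y j)) /\ is_tight_frame ip N y k)
   <-> projection_decomposition ip Rop) /\
  (forall (N : option nat) (y : nat -> V),
      (forall j, inJ N j -> in_ellipsoid ip T (y j)) -> is_tight_frame ip N y k ->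
      [/\ forall j, inJ N j -> nsq (Tinv (y j)) = 1,
          is_frame ip N (fun j => Tinv (y j)) &
          is_frame_operator ip N (fun j => Tinv (y j)) Rop]).
Proof.
move=> sq_ge0 sqK [_ complete [d d_dense]] T Tinv [T_bounded T_sym _] TK TinvK.
move=> Tinv_bounded k k_gt0 Rop; rewrite {}/Rop.
split=> [|N y]; last by apply: tight_frame_pullback.
split=> [[N [y [y_ell y_tight]]]|R_dec].
  by apply: tight_frame_projection_decomposition y_ell y_tight.
have [N [u [u1 Ru]]] := projection_decomposition_unit_frame sq_ge0 sqK d_dense R_dec.
by exists N, (fun j => T (u j)); apply: weak_frame_operator_tight_frame.
Qed.

End InnerProduct.

Theorem proposition13 (R : realType) :
  (* real case: scalars R, conjugation = identity *)
  (forall (V : lmodType R) (ip : V -> V -> R),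
   separable_hilbert (fun z => z) ip ->
   forall (T : {linear V -> V}) (Tinv : V -> V),
   positive_op ip T -> cancel T Tinv -> cancel Tinv T -> bounded_op ip Tinv ->
   forall k : R, 0 < k ->
   let Rop := fun w => k *: Tinv (Tinv w) in
   ((exists (N : option nat) (y : nat -> V),
       (forall j, inJ N j -> in_ellipsoid ip T (y j)) /\ is_tight_frame ip N y k)
    <-> projection_decomposition ip Rop) /\
   (forall (N : option nat) (y : nat -> V),
       (forall j, inJ N j -> in_ellipsoid ip T (y j)) -> is_tight_frame ip N y k ->
       [/\ forall j, inJ N j -> nsq ip (Tinv (y j)) = 1,
           is_frame ip N (fun j => Tinv (y j)) &
           is_frame_operator ip N (fun j => Tinv (y j)) Rop]))
  /\
  (* complex case: scalars R[i], conjugation = complex conjugation *)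
  (forall (V : lmodType R[i]) (ip : V -> V -> R[i]),
   separable_hilbert (fun z => z^*) ip ->
   forall (T : {linear V -> V}) (Tinv : V -> V),
   positive_op ip T -> cancel T Tinv -> cancel Tinv T -> bounded_op ip Tinv ->
   forall k : R[i], 0 < k ->
   let Rop := fun w => k *: Tinv (Tinv w) in
   ((exists (N : option nat) (y : nat -> V),
       (forall j, inJ N j -> in_ellipsoid ip T (y j)) /\ is_tight_frame ip N y k)
    <-> projection_decomposition ip Rop) /\
   (forall (N : option nat) (y : nat -> V),
       (forall j, inJ N j -> in_ellipsoid ip T (y j)) -> is_tight_frame ip N y k ->
       [/\ forall j, inJ N j -> nsq ip (Tinv (y j)) = 1,
           is_frame ip N (fun j => Tinv (y j)) &
           is_frame_operator ip N (fun j => Tinv (y j)) Rop])).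
Proof.
split=> V ip Hsep; have [IP _ _] := Hsep.
- have mul_id (z : R) : z * z = `|z| ^+ 2 by rewrite real_normK ?num_real // expr2.
  exact: (ellipsoid_tight_frame_iff (fun _ _ => erefl) (fun _ _ => erefl) (fun _ => erefl)
    mul_id (fun _ _ => erefl) IP (@sqrtr_ge0 R) (@sqr_sqrtr R) Hsep).
- have cj_ge0 (r : R[i]) : 0 <= r -> r^* = r by move=> /ger0_real; rewrite CrealE => /eqP.
  have sqrt_ge0 (r : R[i]) : 0 <= sqrtC `|r| by rewrite sqrtC_ge0.
  have sqrtK (r : R[i]) : 0 <= r -> sqrtC `|r| ^+ 2 = r by move=> r0; rewrite sqrtCK ger0_norm.
  have cjD (x y : R[i]) : (x + y)^* = x^* + y^* by rewrite rmorphD.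
  have cjM (x y : R[i]) : (x * y)^* = x^* * y^* by rewrite rmorphM.
  have cjK (x : R[i]) : x^*^* = x by rewrite conjCK.
  have mul_cj (z : R[i]) : z * z^* = `|z| ^+ 2 by rewrite normCK.
  exact: (ellipsoid_tight_frame_iff cjD cjM cjK mul_cj cj_ge0 IP sqrt_ge0 sqrtK Hsep).
Qed.
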